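(* Let $I\subset\mathbb{R}$ be an open interval, $W\subset I$ a countable dense subset, $\mathrm{gr}\colon W\to\mathbb{N}$ a grading with finite fibers, $K>1$, and give the fractured interval $\check I$ the division metric with steepness $K$. Suppose that for every $\alpha>0$ there is $M>0$ with $\mathrm{gap}(r)\ge Mr^\alpha$ for all $r>0$. If $f$ is a Hölder function from $\check I$ to a metric space such that $f(w^L)=f(w^R)$ for all $w\in W$, then $f$ is constant.
   Context: The divided interval of $I$ at $W$ is $\hat I = \{w^{L}, \hat w, w^{R} : w\in W\}\sqcup (I\smallsetminus W)$, with $\pi\colon\hat I\to I$ sending $w^L,\hat w,w^R$ to $w$ and fixing $I\smallsetminus W$, totally ordered so that $\pi$ is order preserving and $w^L<\hat w<w^R$. For $a,b\in\hat I\cup\{\pm\infty\}$, $(a,b)=\{s: a<s<b\}$; basis intervals are the nonempty $(a,b)$ other than those with $a=w^L$ or $b=w^R$, and they generate the topology. The fractured interval is $\check I=\hat I\smallsetminus\{\hat w:w\in W\}$. The height of $\hat w$ is $K^{-\mathrm{gr}(w)}$, all other points have height $0$; the division metric is $d(a,b)=$ maximum height of points of $(a,b)\subset\hat I$ for $a<b$ in $\check I$. Let $W_{\ge r}=\{w\in W: K^{-\mathrm{gr}(w)}\ge r\}$ and $\mathrm{gap}(r)$ be the minimum Euclidean distance between distinct points of $W_{\ge r}$ (with $\mathrm{gap}(r)=+\infty$ if $W_{\ge r}$ has fewer than two points). Hölder means Hölder with some exponent $\nu>0$ with respect to $d$. *)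

From Stdlib Require Import Reals Lra ClassicalEpsilon List.
Open Scope R_scope.

(** An open interval of R: (lo, hi) with lo possibly -oo (None) and
    hi possibly +oo (None). *)
Definition is_open_interval (I : R -> Prop) : Prop :=
  exists lo hi : option R, forall x,
    I x <-> ((match lo with Some a => a < x | None => True end) /\
             (match hi with Some b => x < b | None => True end)).

Definition countable_set (W : R -> Prop) : Prop :=
  exists e : nat -> R, forall w, W w -> exists n, e n = w.

Definition dense_in (W I : R -> Prop) : Prop :=
  (forall w, W w -> I w) /\
  (forall x y, I x -> I y -> x < y -> exists w, W w /\ x < w /\ w < y).

Definition finite_fibers (W : R -> Prop) (gr : R -> nat) : Prop :=
  forall n : nat, exists l : list R, forall w, W w -> gr w = n -> In w l.

(** Points of the divided interval: w^L, \hat w, w^R (w in W) and x in I \ W. *)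
Inductive dpt : Type :=
| PL : R -> dpt
| PH : R -> dpt
| PR : R -> dpt
| PO : R -> dpt.

Definition proj (p : dpt) : R :=
  match p with PL w | PH w | PR w | PO w => w end.

(* tag giving w^L < \hat w < w^R; points of I \ W never share a projection
   with a point of W *)
Definition tag (p : dpt) : nat :=
  match p with PL _ => 0%nat | PH _ => 1%nat | PR _ => 2%nat | PO _ => 1%nat end.

Definition in_hat (I W : R -> Prop) (p : dpt) : Prop :=
  match p with
  | PL w | PH w | PR w => W w
  | PO x => I x /\ ~ W x
  end.

Definition in_check (I W : R -> Prop) (p : dpt) : Prop :=
  in_hat I W p /\ (forall w, p <> PH w).

Definition dlt (p q : dpt) : Prop :=
  proj p < proj q \/ (proj p = proj q /\ (tag p < tag q)%nat).

Definition height (K : R) (gr : R -> nat) (p : dpt) : R :=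
  match p with PH w => / (K ^ gr w) | _ => 0 end.

Definition is_max_height (I W : R -> Prop) (gr : R -> nat) (K : R)
    (a b : dpt) (r : R) : Prop :=
  (exists s, in_hat I W s /\ dlt a s /\ dlt s b /\ height K gr s = r) /\
  (forall s, in_hat I W s -> dlt a s -> dlt s b -> height K gr s <= r).

Definition div_dist (I W : R -> Prop) (gr : R -> nat) (K : R) (a b : dpt) : R :=
  epsilon (inhabits 0) (is_max_height I W gr K a b).

Definition is_metric {X : Type} (dist : X -> X -> R) : Prop :=
  (forall x y, 0 <= dist x y) /\
  (forall x y, dist x y = 0 <-> x = y) /\
  (forall x y, dist x y = dist y x) /\
  (forall x y z, dist x z <= dist x y + dist y z).

Definition holder_check (I W : R -> Prop) (gr : R -> nat) (K : R)
    {X : Type} (dist : X -> X -> R) (f : dpt -> X) : Prop :=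
  exists nu C : R, 0 < nu /\
    forall a b, in_check I W a -> in_check I W b -> dlt a b ->
      dist (f a) (f b) <= C * Rpower (div_dist I W gr K a b) nu.

(** gap(r) >= m, where gap(r) is the minimum distance between distinct points
    of W_{>= r} = {w in W : K^{-gr w} >= r} (+oo if fewer than two points) *)
Definition gap_ge (W : R -> Prop) (gr : R -> nat) (K r m : R) : Prop :=
  forall w1 w2, W w1 -> W w2 -> w1 <> w2 ->
    / (K ^ gr w1) >= r -> / (K ^ gr w2) >= r -> Rabs (w1 - w2) >= m.

From Stdlib Require Import Reals Lra Lia ZArith List Classical ClassicalEpsilon.
Open Scope R_scope.

(* Fix a level N. Since f(w^L) = f(w^R), f can be followed from a to b by
   jumping over every hat of grade <= N between them; each remaining stretch
   contains only hats of grade > N, so it has division diameter <= K^-N and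
   f moves by at most C K^(-N nu) along it. By the gap hypothesis with
   exponent nu/2 there are O(K^(N nu/2)) such hats between a and b, so
   d(f a, f b) = O(K^(-N nu/2)) for every N, i.e. f a = f b. *)

Lemma exists_argmin_in_list (P : R -> Prop) (k : R -> R) (l : list R) :
  (forall x, P x -> In x l) -> (exists x, P x) ->
  exists x, P x /\ forall y, P y -> k x <= k y.
Proof.
  revert P; induction l as [|a l IH]; intros P Hl [x0 Hx0].
  - destruct (Hl x0 Hx0).
  - set (P' := fun y => P y /\ y <> a).
    assert (Hl' : forall y, P' y -> In y l)
      by (intros y [Py Hya]; destruct (Hl y Py); [congruence|auto]).
    destruct (classic (exists y, P' y)) as [HP'|HP'].
    + destruct (IH P' Hl' HP') as [m [[Pm _] Hm]].
      destruct (classic (P a /\ k a <= k m)) as [[Pa Ham]|Ham].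
      * exists a; split; [exact Pa|].
        intros y Py; destruct (Req_dec y a) as [->|Hya]; [lra|].
        specialize (Hm y (conj Py Hya)); lra.
      * exists m; split; [exact Pm|].
        intros y Py; destruct (Req_dec y a) as [->|Hya].
        -- destruct (Rle_dec (k a) (k m)); [tauto|lra].
        -- exact (Hm y (conj Py Hya)).
    + assert (Hunique : forall y, P y -> y = a)
        by (intros y Py; apply NNPP; intro Hya; apply HP'; exists y; split; auto).
      exists a; split; [rewrite <- (Hunique x0 Hx0); exact Hx0|].
      intros y Py; rewrite (Hunique y Py); lra.
Qed.

Lemma finite_fibers_le (W : R -> Prop) (gr : R -> nat) :
  finite_fibers W gr ->
  forall N, exists l, forall w, W w -> (gr w <= N)%nat -> In w l.
Proof.
  intros Hgr N; induction N as [|N [l Hl]].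
  - destruct (Hgr 0%nat) as [l Hl]; exists l; intros w Hw Hg; apply Hl; auto; lia.
  - destruct (Hgr (S N)) as [l' Hl']; exists (l ++ l').
    intros w Hw Hg; apply in_or_app.
    destruct (Nat.eq_dec (gr w) (S N)); [right|left]; auto with arith.
    apply Hl; auto; lia.
Qed.

Lemma exists_nat_gt_le_succ (x : R) : 0 <= x -> exists n : nat, x < INR n <= x + 1.
Proof.
  intros Hx; destruct (archimed x) as [H1 H2].
  assert (Hup : (0 < up x)%Z) by (apply lt_0_IZR; lra).
  exists (Z.to_nat (up x)); rewrite INR_IZR_INZ, Z2Nat.id by lia; lra.
Qed.

Lemma le_geometric_eq0 (d A q : R) :
  0 <= d -> 0 < q < 1 -> (forall N, d <= A * q ^ N) -> d = 0.
Proof.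
  intros Hd Hq Hgeo; destruct Hd as [Hd|]; [exfalso|auto].
  destruct (Rle_dec A 0) as [HA|HA].
  - specialize (Hgeo 0%nat); simpl in Hgeo; lra.
  - destruct (pow_lt_1_zero q) with (d / A) as [N HN];
      [rewrite Rabs_pos_eq; lra|apply Rdiv_lt_0_compat; lra|].
    specialize (HN N (Nat.le_refl N)); rewrite Rabs_pos_eq in HN
      by (apply pow_le; lra).
    specialize (Hgeo N).
    apply (Rmult_lt_compat_l A) in HN; [|lra].
    replace (A * (d / A)) with d in HN by (field; lra); lra.
Qed.

Lemma Rpower_inv_pow (K s : R) (N : nat) :
  0 < K -> Rpower (/ K ^ N) s = Rpower K (- s) ^ N.
Proof.
  intros HK.
  rewrite <- (Rpower_pow N K), <- Rpower_Ropp, <- (Rpower_pow N (Rpower K (- s)))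
    by (auto; unfold Rpower; apply exp_pos).
  rewrite !Rpower_mult; f_equal; ring.
Qed.

Definition dle (p q : dpt) : Prop := dlt p q \/ p = q.

Lemma dlt_trans p q r : dlt p q -> dlt q r -> dlt p r.
Proof.
  unfold dlt; intros [H|[H1 H2]] [H'|[H1' H2']]; try (left; lra).
  right; split; [lra|lia].
Qed.

Lemma dlt_PL_PH w : dlt (PL w) (PH w).
Proof. right; simpl; auto. Qed.

Lemma dlt_PH_PL_lt w' w : dlt (PH w') (PL w) -> w' < w.
Proof. intros [H|[_ H]]; simpl in *; [lra|lia]. Qed.

Lemma dlt_PR_PH_lt w w' : dlt (PR w) (PH w') -> w < w'.
Proof. intros [H|[_ H]]; simpl in *; [lra|lia]. Qed.

Lemma dlt_proj_le p q : dlt p q -> proj p <= proj q.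
Proof. intros [H|[H _]]; lra. Qed.

Section FracturedInterval.

Variables I W : R -> Prop.

Lemma in_check_PL w : W w -> in_check I W (PL w).
Proof. intros Hw; split; [exact Hw|discriminate]. Qed.

Lemma in_check_PR w : W w -> in_check I W (PR w).
Proof. intros Hw; split; [exact Hw|discriminate]. Qed.

Lemma dlt_trichotomy a b :
  in_check I W a -> in_check I W b -> a = b \/ dlt a b \/ dlt b a.
Proof.
  intros [Ha Ha'] [Hb Hb']; unfold dlt.
  destruct (total_order_T (proj a) (proj b)) as [[H|H]|H];
    [right; left; left; exact H| |right; right; left; exact H].
  destruct (lt_eq_lt_dec (tag a) (tag b)) as [[T|T]|T];
    [right; left; right; auto| |right; right; right; auto].
  destruct a, b; simpl in *; subst; try lia; auto;
    [destruct (Ha' r0)|destruct (Hb' r0)]; reflexivity.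
Qed.

Lemma dle_PL_of_dlt_PH a w : in_check I W a -> dlt a (PH w) -> dle a (PL w).
Proof.
  intros [Ha Ha'] [H|[H1 H2]]; [left; left; exact H|].
  destruct a; simpl in *; subst; try lia; right; reflexivity.
Qed.

Lemma dle_PR_of_dlt_PH b w : in_check I W b -> dlt (PH w) b -> dle (PR w) b.
Proof.
  intros [Hb Hb'] [H|[H1 H2]]; [left; left; exact H|].
  destruct b; simpl in *; subst; try lia; right; reflexivity.
Qed.

Lemma exists_hat_between a b : dense_in W I ->
  in_check I W a -> in_check I W b -> dlt a b ->
  exists w, W w /\ dlt a (PH w) /\ dlt (PH w) b.
Proof.
  intros [HWI HD] [Ha Ha'] [Hb Hb'] [H|[H1 H2]].
  - assert (HI : forall p, in_hat I W p -> I (proj p))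
      by (intros []; simpl; intuition).
    destruct (HD (proj a) (proj b)) as [w [Hw [Haw Hwb]]]; auto.
    exists w; repeat split; auto; left; auto.
  - destruct a, b; simpl in *; subst; try lia;
      try (destruct (Ha' r0); reflexivity); try (destruct (Hb' r0); reflexivity);
      try (destruct Ha; contradiction); try (destruct Hb; contradiction).
    exists r0; split; [exact Ha|split; right; simpl; auto].
Qed.

End FracturedInterval.

Section DivisionMetric.

Variables (I W : R -> Prop) (gr : R -> nat) (K : R).
Hypotheses (HWd : dense_in W I) (Hgr : finite_fibers W gr) (HK : 1 < K).

Lemma inv_pow_pos n : 0 < / K ^ n.
Proof. apply Rinv_0_lt_compat, pow_lt; lra. Qed.

Lemma inv_pow_le m n : (m <= n)%nat -> / K ^ n <= / K ^ m.
Proof.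
  intros; apply Rinv_le_contravar; [apply pow_lt; lra|apply Rle_pow; auto; lra].
Qed.

(* The maximum height over (a, b) is attained at a hat of minimal grade, which
   exists since the hats of grade at most that of any given one form a finite set. *)
Lemma div_dist_spec a b : in_check I W a -> in_check I W b -> dlt a b ->
  is_max_height I W gr K a b (div_dist I W gr K a b).
Proof.
  intros Ha Hb Hab; unfold div_dist; apply epsilon_spec.
  destruct (exists_hat_between I W a b HWd Ha Hb Hab) as [w0 [Hw0 [Haw0 Hw0b]]].
  destruct (finite_fibers_le W gr Hgr (gr w0)) as [l Hl].
  destruct (exists_argmin_in_list
              (fun w => W w /\ (gr w <= gr w0)%nat /\ dlt a (PH w) /\ dlt (PH w) b)
              (fun w => INR (gr w)) l) as [w [[Hw [_ [Haw Hwb]]] Hmin]].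
  - intros w [Hw [Hgw _]]; auto.
  - exists w0; auto.
  - exists (/ K ^ gr w); split; [exists (PH w); simpl; auto|].
    intros [v|v|v|v] Hv Hav Hvb; simpl; try (left; apply inv_pow_pos).
    apply inv_pow_le, INR_le.
    destruct (le_dec (gr v) (gr w0)); [apply Hmin; auto|].
    assert (Hww0 : (gr w <= gr w0)%nat) by (apply INR_le, Hmin; auto).
    apply le_INR; lia.
Qed.

Definition low_hat (N : nat) (a b : dpt) (w : R) : Prop :=
  W w /\ (gr w <= N)%nat /\ dlt a (PH w) /\ dlt (PH w) b.

Lemma div_dist_pos a b : in_check I W a -> in_check I W b -> dlt a b ->
  0 < div_dist I W gr K a b.
Proof.
  intros Ha Hb Hab.
  destruct (div_dist_spec a b Ha Hb Hab) as [_ Hmax].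
  destruct (exists_hat_between I W a b HWd Ha Hb Hab) as [w [Hw [Haw Hwb]]].
  specialize (Hmax (PH w) Hw Haw Hwb); simpl in Hmax.
  pose proof (inv_pow_pos (gr w)); lra.
Qed.

Lemma div_dist_le_of_no_low_hat N a b :
  in_check I W a -> in_check I W b -> dlt a b -> (forall w, ~ low_hat N a b w) ->
  div_dist I W gr K a b <= / K ^ N.
Proof.
  intros Ha Hb Hab Hno.
  destruct (div_dist_spec a b Ha Hb Hab) as [[s [Hs [Has [Hsb <-]]]] _].
  destruct s as [v|v|v|v]; simpl; try (left; apply inv_pow_pos).
  apply inv_pow_le.
  destruct (le_lt_dec (gr v) N) as [Hv|Hv]; [destruct (Hno v); repeat split|]; auto; lia.
Qed.

Lemma leftmost_low_hat N a b :
  (forall w, ~ low_hat N a b w) \/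
  exists w, low_hat N a b w /\ forall w', low_hat N a b w' -> w <= w'.
Proof.
  destruct (classic (exists w, low_hat N a b w)) as [Hex|Hno];
    [right|left; intros w Hw; apply Hno; exists w; exact Hw].
  destruct (finite_fibers_le W gr Hgr N) as [l Hl].
  apply (exists_argmin_in_list (low_hat N a b) (fun w => w) l); auto.
  intros w [Hw [Hgw _]]; auto.
Qed.

Section Holder.

Variables (X : Type) (dist : X -> X -> R) (f : dpt -> X) (nu C : R).
Hypotheses (Hdist : is_metric dist) (Hnu : 0 < nu) (HC : 0 <= C).
Hypothesis Hhol : forall a b, in_check I W a -> in_check I W b -> dlt a b ->
  dist (f a) (f b) <= C * Rpower (div_dist I W gr K a b) nu.
Hypothesis HLR : forall w, W w -> f (PL w) = f (PR w).

Lemma dist_le_of_no_low_hat N a b :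
  in_check I W a -> in_check I W b -> dle a b -> (forall w, ~ low_hat N a b w) ->
  dist (f a) (f b) <= C * Rpower (/ K ^ N) nu.
Proof.
  intros Ha Hb [Hab| <-] Hno.
  - eapply Rle_trans; [apply Hhol; auto|].
    apply Rmult_le_compat_l; [exact HC|].
    apply Rle_Rpower_l; [lra|split].
    + apply div_dist_pos; auto.
    + apply div_dist_le_of_no_low_hat; auto.
  - destruct Hdist as [_ [Hdeq _]].
    rewrite (proj2 (Hdeq (f a) (f a)) eq_refl).
    apply Rmult_le_pos; [exact HC|left; apply exp_pos].
Qed.

(* Walk from a to b through the low hats w in increasing order: (w^L, w^R) costs
   nothing, and each stretch between consecutive low hats contains none. *)
Lemma dist_le_low_hats_in_window N g :
  0 < g ->
  (forall w1 w2, W w1 -> W w2 -> (gr w1 <= N)%nat -> (gr w2 <= N)%nat -> w1 <> w2 ->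
     g <= Rabs (w1 - w2)) ->
  forall n x a b, in_check I W a -> in_check I W b -> dle a b ->
  (forall w, low_hat N a b w -> x <= w < x + INR n * g) ->
  dist (f a) (f b) <= (INR n + 1) * (C * Rpower (/ K ^ N) nu).
Proof.
  intros Hg Hsep.
  set (eps := C * Rpower (/ K ^ N) nu).
  assert (Heps : 0 <= eps) by (apply Rmult_le_pos; [exact HC|left; apply exp_pos]).
  destruct Hdist as [_ [_ [_ Htri]]].
  induction n as [|n IH]; intros x a b Ha Hb Hab Hwin.
  - change (INR 0) with 0 in *; rewrite Rplus_0_l, Rmult_1_l.
    apply dist_le_of_no_low_hat; auto.
    intros w Hw; specialize (Hwin w Hw); lra.
  - rewrite S_INR.
    destruct (leftmost_low_hat N a b) as [Hno|[w [Hw Hleft]]].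
    + apply Rle_trans with eps; [apply dist_le_of_no_low_hat; auto|].
      pose proof (pos_INR n); nra.
    + destruct Hw as [Ww [Gw [Haw Hwb]]].
      assert (Hxw := Hwin w (conj Ww (conj Gw (conj Haw Hwb)))).
      assert (Hleft_part : dist (f a) (f (PL w)) <= eps).
      { apply dist_le_of_no_low_hat;
          [exact Ha|exact (in_check_PL I W w Ww)|exact (dle_PL_of_dlt_PH I W a w Ha Haw)|].
        intros w' [Ww' [Gw' [Haw' Hw'w]]].
        assert (Hlt := dlt_PH_PL_lt _ _ Hw'w).
        enough (w <= w') by lra.
        apply Hleft; repeat split; auto.
        eapply dlt_trans; [exact Hw'w|]; eapply dlt_trans; [apply dlt_PL_PH|exact Hwb]. }
      assert (Hright_part : dist (f (PR w)) (f b) <= (INR n + 1) * eps).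
      { apply (IH (x + g));
          [exact (in_check_PR I W w Ww)|exact Hb|exact (dle_PR_of_dlt_PH I W b w Hb Hwb)|].
        intros w' [Ww' [Gw' [Hww' Hw'b]]].
        assert (Hlt := dlt_PR_PH_lt _ _ Hww').
        assert (Haw' : dlt a (PH w')) by (eapply dlt_trans; [exact Haw|left; exact Hlt]).
        destruct (Hwin w' (conj Ww' (conj Gw' (conj Haw' Hw'b)))).
        assert (Hgap : g <= Rabs (w' - w)) by (apply Hsep; auto; lra).
        rewrite Rabs_right in Hgap by lra; rewrite S_INR in *; lra. }
      rewrite <- (HLR w Ww) in Hright_part.
      specialize (Htri (f a) (f (PL w)) (f b)); lra.
Qed.

Hypothesis Hgap : forall alpha, 0 < alpha -> exists M, 0 < M /\
  forall r, 0 < r -> gap_ge W gr K r (M * Rpower r alpha).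

(* Gap exponent nu/2: the (proj b - proj a) / gap ~ K^(N nu/2) stretches of the
   walk each cost K^(-N nu), so their sum decays like K^(-N nu/2). *)
Lemma dist_le_geometric a b : in_check I W a -> in_check I W b -> dlt a b ->
  exists A q, 0 < q < 1 /\ forall N, dist (f a) (f b) <= A * q ^ N.
Proof.
  intros Ha Hb Hab.
  destruct (Hgap (nu / 2)) as [M [HM HgapM]]; [lra|].
  set (q := Rpower K (- (nu / 2))).
  assert (Hq : 0 < q < 1).
  { split; [apply exp_pos|].
    rewrite <- (Rpower_O K) by lra; apply Rpower_lt; lra. }
  set (L := proj b - proj a).
  assert (HL : 0 <= L) by (pose proof (dlt_proj_le a b Hab); unfold L; lra).
  exists (L * C / M + 2 * C), q; split; [exact Hq|]; intros N.
  assert (HqN : 0 < q ^ N <= 1)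
    by (split; [apply pow_lt; lra|rewrite <- (pow1 N); apply pow_incr; lra]).
  set (g := M * q ^ N).
  assert (Hg : 0 < g) by (apply Rmult_lt_0_compat; lra).
  assert (Hsep : forall w1 w2, W w1 -> W w2 -> (gr w1 <= N)%nat -> (gr w2 <= N)%nat ->
                   w1 <> w2 -> g <= Rabs (w1 - w2)).
  { intros w1 w2 Hw1 Hw2 Hg1 Hg2 Hne; apply Rge_le.
    unfold g, q; rewrite <- Rpower_inv_pow by lra.
    apply (HgapM (/ K ^ N) (inv_pow_pos N)); auto; apply Rle_ge, inv_pow_le; auto. }
  destruct (exists_nat_gt_le_succ (L / g)) as [n [Hn1 Hn2]];
    [apply Rmult_le_pos; [exact HL|left; apply Rinv_0_lt_compat, Hg]|].
  assert (HnL : L < INR n * g).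
  { apply (Rmult_lt_compat_r g) in Hn1; [|exact Hg].
    unfold Rdiv in Hn1; rewrite Rmult_assoc, Rinv_l, Rmult_1_r in Hn1; lra. }
  eapply Rle_trans; [apply (dist_le_low_hats_in_window N g Hg Hsep n (proj a)); auto|].
  - left; exact Hab.
  - intros w [_ [_ [Haw Hwb]]].
    apply dlt_proj_le in Haw, Hwb; simpl in *; unfold L in HnL; lra.
  - assert (Hqq : Rpower (/ K ^ N) nu = q ^ N * q ^ N).
    { rewrite Rpower_inv_pow, <- Rpow_mult_distr by lra; unfold q.
      rewrite <- Rpower_plus; f_equal; f_equal; field. }
    rewrite Hqq.
    apply Rle_trans with ((L / g + 2) * (C * (q ^ N * q ^ N))).
    + apply Rmult_le_compat_r; [apply Rmult_le_pos; [exact HC|nra]|lra].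
    + unfold g; replace ((L / (M * q ^ N) + 2) * (C * (q ^ N * q ^ N)))
        with (L * C / M * q ^ N + 2 * C * q ^ N * q ^ N) by (field; lra).
      assert (0 <= C * q ^ N) by (apply Rmult_le_pos; lra); nra.
Qed.

Lemma holder_dist_eq0 a b : in_check I W a -> in_check I W b -> dlt a b ->
  dist (f a) (f b) = 0.
Proof.
  intros Ha Hb Hab.
  destruct (dist_le_geometric a b Ha Hb Hab) as [A [q [Hq Hgeo]]].
  apply (le_geometric_eq0 _ A q); auto; apply Hdist.
Qed.

End Holder.

End DivisionMetric.

Theorem corollary3p11
  (I W : R -> Prop) (gr : R -> nat) (K : R)
  (HI : is_open_interval I) (HWc : countable_set W) (HWd : dense_in W I)
  (Hgr : finite_fibers W gr) (HK : 1 < K)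
  (Hgap : forall alpha, 0 < alpha -> exists M, 0 < M /\
            forall r, 0 < r -> gap_ge W gr K r (M * Rpower r alpha))
  (X : Type) (dist : X -> X -> R) (Hdist : is_metric dist)
  (f : dpt -> X)
  (Hf : holder_check I W gr K dist f)
  (HLR : forall w, W w -> f (PL w) = f (PR w)) :
  forall a b, in_check I W a -> in_check I W b -> f a = f b.
Proof.
  intros a b Ha Hb.
  destruct Hf as [nu [C [Hnu Hhol]]].
  assert (Hhol_abs : forall a b, in_check I W a -> in_check I W b -> dlt a b ->
            dist (f a) (f b) <= Rabs C * Rpower (div_dist I W gr K a b) nu).
  { intros p q Hp Hq Hpq; eapply Rle_trans; [apply Hhol; auto|].
    apply Rmult_le_compat_r; [left; apply exp_pos|apply Rle_abs]. }
  assert (Hvanish := holder_dist_eq0 I W gr K HWd Hgr HK X dist f nu (Rabs C)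
                       Hdist Hnu (Rabs_pos C) Hhol_abs HLR Hgap).
  destruct Hdist as [_ [Hdeq _]].
  destruct (dlt_trichotomy I W a b Ha Hb) as [->|[Hab|Hba]]; [reflexivity| |].
  - apply Hdeq, Hvanish; auto.
  - symmetry; apply Hdeq, Hvanish; auto.
Qed.
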